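(* Let $p$ be an odd prime and $a$ an integer with $1<a<p$. Then there exists a $PComS\!\left(p,\tfrac{p-1}{2},\,2a(a-p)+\tfrac{p(p-1)}{2}\right)$ all of whose members are classes of sequences in $\mathcal{G}_p(a)$.
   Context: $\mathbb{Z}_2^p$ is the set of sequences $X=(x_0,\dots,x_{p-1})$ with entries in $\{+1,-1\}$, indices mod $p$. $\mathcal{G}_p(a)$ is the set of $X\in\mathbb{Z}_2^p$ with exactly $a$ entries equal to $+1$. The periodic autocorrelation is $\mathsf{P}_X(k)=\sum_{i=0}^{p-1}x_ix_{i+k}$; it depends only on the cyclic-shift class $X_C$. A $PComS(n,q,c)$ is a list (repetitions allowed) of $q$ cyclic-shift classes $A_{1C},\dots,A_{qC}$ with $A_i\in\mathbb{Z}_2^n$ such that $\sum_{i=1}^q\mathsf{P}_{A_i}(k)=c$ for all $1\le k\le n-1$. *)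

From HB Require Import structures.
From mathcomp Require Import all_boot all_order all_algebra.
Set Implicit Arguments. Unset Strict Implicit. Unset Printing Implicit Defensive.
Import Order.TTheory GRing.Theory Num.Theory.
Local Open Scope ring_scope.

(* An element X = (x_0,...,x_{p-1}) of Z_2^p: a sequence of p integers, each +1 or -1.
   Indices are taken mod p. *)
Definition pm1seq (p : nat) (X : seq int) : bool :=
  (size X == p) && all (fun x => (x == 1) || (x == -1)) X.

Definition inG (p a : nat) (X : seq int) : bool :=
  pm1seq p X && (count (pred1 (1 : int)) X == a)%N.

Definition pacf (p : nat) (X : seq int) (k : nat) : int :=
  \sum_(i < p) X`_i * X`_((i + k) %% p).

(* PComS(n,q,c): a list of q elements of Z_2^n (representatives of cyclic-shift
   classes; pacf is shift invariant) with sum_i P_{A_i}(k) = c for 1 <= k <= n-1. *)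
Definition PComS (n q : nat) (c : int) (L : seq (seq int)) : bool :=
  [&& size L == q, all (pm1seq n) L &
      [forall k : 'I_n, (0 < k)%N ==> (\sum_(A <- L) pacf n A k == c)]].

From HB Require Import structures.
From mathcomp Require Import all_boot all_order all_algebra.
From mathcomp Require Import zify.
Set Implicit Arguments.
Unset Strict Implicit.
Unset Printing Implicit Defensive.

Import Order.TTheory GRing.Theory Num.Theory.
Local Open Scope ring_scope.

(** Let [w] be the p-periodic +-1 sequence with [w x = 1] exactly when [x mod p < a], and
    take its decimations [X_u i = w (i * u)] for [u = 1, ..., (p-1)/2]. Multiplication by
    [u] permutes the residues mod p, so [X_u] is a rearrangement of one period of [w]
    (hence lies in G_p(a)), and [P_{X_u}(k) = C(k u)], where [C] is the periodic
    autocorrelation of [w]. For [k <> 0 mod p], [k u] runs over all nonzero residues as [u]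
    runs over [1, ..., p-1], and [C(k u) = C(k (p - u))]; so the half sum is
    [(sum_(m <> 0) C(m)) / 2 = ((sum w)^2 - C(0)) / 2 = ((2a - p)^2 - p) / 2]. *)

Section ModularReindexing.

Variable p : nat.

Lemma addn_mod_inj j : {in gtn p &, injective (fun i => (i + j) %% p)%N}.
Proof.
by move=> i i' /[!inE] ip ip' /eqP; rewrite eqn_modDr !modn_small // => /eqP.
Qed.

Lemma muln_mod_inj u : coprime u p -> {in gtn p &, injective (fun i => (i * u) %% p)%N}.
Proof.
move=> co_up i i' /[!inE] ip ip' /= /eqP eq_mod.
wlog le_ii' : i i' ip ip' eq_mod / (i <= i')%N.
  move=> le_inj; case: (leqP i i') => [|/ltnW] le; first exact: le_inj.
  by apply/esym/le_inj; rewrite // eq_sym.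
move: eq_mod; rewrite eq_sym eqn_mod_dvd ?leq_mul2r ?le_ii' ?orbT //.
rewrite -mulnBl Gauss_dvdl 1?coprime_sym // /dvdn modn_small; lia.
Qed.

Hypothesis p_gt0 : (0 < p)%N.

Lemma perm_iota_mod (g : nat -> nat) :
  {in gtn p &, injective (fun i => g i %% p)%N} ->
  perm_eq [seq g i %% p | i <- iota 0 p]%N (iota 0 p).
Proof.
move=> g_inj; have g_uniq : uniq [seq g i %% p | i <- iota 0 p]%N.
  by rewrite map_inj_in_uniq ?iota_uniq // => i j; rewrite !mem_iota; apply: g_inj.
have sub_iota : {subset [seq g i %% p | i <- iota 0 p]%N <= iota 0 p}.
  by move=> _ /mapP[i _ ->]; rewrite mem_iota ltn_pmod.
have [|_ eq_iota] := uniq_min_size g_uniq sub_iota; first by rewrite size_map.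
exact: uniq_perm g_uniq (iota_uniq 0 p) eq_iota.
Qed.

Lemma sum_ord_mod_reindex (V : nmodType) (F : nat -> V) (g : nat -> nat) :
  {in gtn p &, injective (fun i => g i %% p)%N} ->
  \sum_(i < p) F (g i %% p)%N = \sum_(i < p) F i.
Proof.
move=> g_inj; rewrite -(big_mkord xpredT F) -(big_mkord xpredT (fun i => F (g i %% p)%N)).
by rewrite /index_iota subn0 -[RHS](perm_big _ (perm_iota_mod g_inj)) big_map.
Qed.

Lemma sum_ord_addn_mod (V : nmodType) (F : nat -> V) j :
  \sum_(i < p) F ((i + j) %% p)%N = \sum_(i < p) F i.
Proof. exact: sum_ord_mod_reindex (@addn_mod_inj j). Qed.

Lemma sum_ord_muln_mod (V : nmodType) (F : nat -> V) u : coprime u p ->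
  \sum_(i < p) F ((i * u) %% p)%N = \sum_(i < p) F i.
Proof. by move=> co_up; apply: sum_ord_mod_reindex (muln_mod_inj co_up). Qed.

End ModularReindexing.

Definition acf (R : pzSemiRingType) (p : nat) (f : nat -> R) (m : nat) : R :=
  \sum_(j < p) f j * f (j + m)%N.

Lemma acf0 (R : pzSemiRingType) (p : nat) (f : nat -> R) :
  (forall x, f x * f x = 1) -> acf p f 0 = p%:R.
Proof.
move=> f_sqr; rewrite /acf (eq_bigr (fun=> 1)) ?sumr_const ?card_ord // => j.
by rewrite addn0.
Qed.

Section PeriodicAutocorrelation.

Variables (R : comPzSemiRingType) (p : nat) (f : nat -> R).
Hypothesis p_gt0 : (0 < p)%N.
Hypothesis f_mod : forall x, f (x %% p)%N = f x.

Lemma acf_mod m : acf p f (m %% p) = acf p f m.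
Proof. by apply: eq_bigr => j _; congr (_ * _); rewrite -f_mod modnDmr f_mod. Qed.

Lemma acf_sym m n : ((m + n) %% p = 0)%N -> acf p f m = acf p f n.
Proof.
move=> mn_mod0; rewrite /acf -(sum_ord_addn_mod p_gt0 (fun j => f j * f (j + m)%N) n).
apply: eq_bigr => j _; rewrite f_mod mulrC; congr (_ * _).
by rewrite -f_mod modnDml -addnA (addnC n) -modnDmr mn_mod0 addn0 f_mod.
Qed.

Lemma sum_acf : \sum_(m < p) acf p f m = (\sum_(j < p) f j) ^+ 2.
Proof.
rewrite /acf exchange_big expr2 mulr_suml; apply: eq_bigr => j _.
rewrite -mulr_sumr -(sum_ord_addn_mod p_gt0 f j).
by congr (_ * _); apply: eq_bigr => m _; rewrite f_mod addnC.
Qed.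

Lemma acf_decimation u k :
  coprime u p -> acf p (fun i => f (i * u)%N) k = acf p f (k * u).
Proof.
move=> co_up; rewrite /acf.
rewrite -(sum_ord_muln_mod p_gt0 (fun j => f j * f (j + k * u)%N) co_up).
apply: eq_bigr => i _; rewrite f_mod mulnDl; congr (_ * _).
by rewrite -[RHS]f_mod modnDml f_mod.
Qed.

Lemma sum_acf_multiples k :
  coprime k p -> \sum_(u < p) acf p f (k * u) = (\sum_(j < p) f j) ^+ 2.
Proof.
move=> co_kp; rewrite -sum_acf -(sum_ord_muln_mod p_gt0 (acf p f) co_kp).
by apply: eq_bigr => u _; rewrite acf_mod mulnC.
Qed.

End PeriodicAutocorrelation.

Lemma sum_sym_halves (V : nmodType) (n : nat) (G : nat -> V) : odd n ->
  (forall u, (0 < u < n)%N -> G (n - u)%N = G u) ->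
  \sum_(1 <= u < n) G u = (\sum_(1 <= u < n.-1./2.+1) G u) *+ 2.
Proof.
move=> n_odd G_sym; have [h n_eq] : exists h, n = h.*2.+1.
  by exists n./2; rewrite -[n in LHS]odd_double_half n_odd.
subst n; rewrite /= doubleK [LHS](@big_cat_nat _ _ _ h.+1) //=; last first.
  by rewrite ltnS -addnn leq_addr.
rewrite mulr2n; congr (_ + _).
rewrite -{1}(add1n h) big_addn (_ : h.*2.+1 - h = h.+1)%N; last by lia.
rewrite big_nat_rev; apply: eq_big_nat => i /andP[i_gt0 i_le_h].
by rewrite -G_sym; [congr G | ]; lia.
Qed.

Lemma acf_multiples_half_sum (R : comPzSemiRingType) (p : nat) (f : nat -> R) k :
  (0 < p)%N -> (forall x, f (x %% p)%N = f x) -> odd p -> coprime k p ->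
  (\sum_(1 <= u < p.-1./2.+1) acf p f (k * u)) *+ 2 + acf p f 0
    = (\sum_(j < p) f j) ^+ 2.
Proof.
move=> p_gt0 f_mod p_odd co_kp.
have acf_opp u : (0 < u < p)%N -> acf p f (k * (p - u)) = acf p f (k * u).
  move=> /andP[_ u_lt_p]; apply: acf_sym => //.
  by rewrite -mulnDr subnK ?modnMl // ltnW.
rewrite -(sum_sym_halves p_odd acf_opp) -(sum_acf_multiples p_gt0 f_mod co_kp).
by rewrite -(big_mkord xpredT (fun u => acf p f (k * u))) big_ltn // muln0 addrC.
Qed.

Definition decimation (T : Type) (p : nat) (f : nat -> T) (u : nat) : seq T :=
  mkseq (fun i => f (i * u)%N) p.

Lemma pacf_mkseq p (f : nat -> int) k : (0 < p)%N ->
  (forall x, f (x %% p)%N = f x) -> pacf p (mkseq f p) k = acf p f k.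
Proof.
by move=> p_gt0 f_mod; apply: eq_bigr => i _; rewrite !nth_mkseq ?ltn_pmod // f_mod.
Qed.

Lemma pm1seq_mkseq p (f : nat -> int) :
  (forall x, (f x == 1) || (f x == -1)) -> pm1seq p (mkseq f p).
Proof.
by move=> f_pm1; rewrite /pm1seq size_mkseq eqxx; apply/allP => _ /mapP[i _ ->].
Qed.

Section Decimation.

Variables (p : nat) (f : nat -> int).
Hypothesis p_gt0 : (0 < p)%N.
Hypothesis f_mod : forall x, f (x %% p)%N = f x.

Lemma pacf_decimation u k : coprime u p -> pacf p (decimation p f u) k = acf p f (k * u).
Proof.
move=> co_up; rewrite -(acf_decimation p_gt0 f_mod _ co_up) pacf_mkseq // => x.
by rewrite -f_mod modnMml f_mod.
Qed.

Lemma perm_decimation u : coprime u p -> perm_eq (decimation p f u) (mkseq f p).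
Proof.
move=> co_up; rewrite /decimation /mkseq -(eq_map (fun i => f_mod (i * u))) map_comp.
exact: perm_map (perm_iota_mod p_gt0 (muln_mod_inj co_up)).
Qed.

End Decimation.

Definition window (p a x : nat) : int := if (x %% p < a)%N then 1 else -1.

Section Window.

Variables p a : nat.
Hypothesis a_le_p : (a <= p)%N.

Lemma window_mod x : window p a (x %% p) = window p a x.
Proof. by rewrite /window modn_mod. Qed.

Lemma window_pm1 x : (window p a x == 1) || (window p a x == -1).
Proof. by rewrite /window; case: ifP. Qed.

Lemma window_sqr x : window p a x * window p a x = 1.
Proof. by rewrite /window; case: ifP. Qed.

Lemma mkseq_window : mkseq (window p a) p = nseq a 1 ++ nseq (p - a) (-1).
Proof.
apply: (@eq_from_nth _ 0); first by rewrite size_cat !size_nseq size_mkseq subnKC.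
move=> i; rewrite size_mkseq => lt_ip.
rewrite nth_mkseq // nth_cat !nth_nseq size_nseq /window modn_small //.
by case: (ltnP i a) => // a_le_i; rewrite ltn_sub2rE ?lt_ip.
Qed.

Lemma count_window : count (pred1 1) (mkseq (window p a) p) = a.
Proof. by rewrite mkseq_window count_cat !count_nseq /= mul1n mul0n addn0. Qed.

Lemma sum_window : \sum_(j < p) window p a j = a%:Z - (p - a)%:Z.
Proof.
have -> : \sum_(j < p) window p a j = \sum_(x <- mkseq (window p a) p) x.
  by rewrite big_map -(big_mkord xpredT) /index_iota subn0.
by rewrite mkseq_window big_cat !big_nseq !iter_addr_0 mulNrn /= !natz.
Qed.

End Window.

Lemma coprime_ltn_prime p u : prime p -> (0 < u < p)%N -> coprime u p.
Proof.
by move=> p_prime /andP[u_gt0 u_lt_p]; rewrite coprime_sym prime_coprime // gtnNdvd.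
Qed.

Lemma half_sum_window_value (p a : nat) (s : int) : odd p -> (a <= p)%N ->
  s *+ 2 + p%:Z = (a%:Z - (p - a)%:Z) ^+ 2 ->
  s = 2 * a%:Z * (a%:Z - p%:Z) + (p * p.-1)./2%:Z.
Proof.
move=> p_odd a_le_p; have [q p_eq] : exists q, p = q.*2.+1.
  by exists p./2; rewrite -[p in LHS]odd_double_half p_odd.
have -> : ((p * p.-1)./2 = p * q)%N by rewrite {2}p_eq /= -doubleMr doubleK.
rewrite -(subzn a_le_p) mulr2n p_eq; lia.
Qed.

Theorem theorem10 (p a : nat) :
  prime p -> odd p -> (1 < a < p)%N ->
  exists L : seq (seq int),
    PComS p (p.-1./2) (2 * a%:Z * (a%:Z - p%:Z) + (p * p.-1)./2%:Z) L
    && all (inG p a) L.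
Proof.
move=> p_prime p_odd /andP[_ a_lt_p]; have p_gt0 := prime_gt0 p_prime.
have a_le_p := ltnW a_lt_p; have f_mod := window_mod p a.
exists [seq decimation p (window p a) u | u <- iota 1 p.-1./2].
have half_lt_p : (p.-1./2 < p)%N by rewrite ltn_half_double; lia.
have coprime_iota u : u \in iota 1 p.-1./2 -> coprime u p.
  by rewrite mem_iota => u_range; apply: coprime_ltn_prime => //; lia.
have pm1_dec u : pm1seq p (decimation p (window p a) u).
  by apply: pm1seq_mkseq => x; apply: window_pm1.
rewrite /PComS size_map size_iota eqxx !all_map /=.
apply/andP; split; [apply/andP; split|].
- by apply/allP => u _; apply: pm1_dec.
- apply/forallP => k; apply/implyP => k_gt0; apply/eqP/half_sum_window_value => //.
  have co_kp : coprime k p by rewrite coprime_ltn_prime ?k_gt0 /=.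
  rewrite -[Posz p]natz -(acf0 _ (window_sqr p a)) -(sum_window a_le_p).
  rewrite -(acf_multiples_half_sum p_gt0 f_mod p_odd co_kp).
  rewrite big_map /index_iota subn1; congr (_ *+ 2 + _).
  by apply: eq_big_seq => u /coprime_iota co_up; rewrite (pacf_decimation p_gt0 f_mod).
- apply/allP => u /coprime_iota co_up; rewrite /= /inG pm1_dec /=.
  by rewrite (permP (perm_decimation p_gt0 f_mod co_up)) count_window.
Qed.
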